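(* Let $\mathcal{H}$ be a nonzero reproducing kernel Hilbert space of $\mathfrak{X}$-valued entire functions with $B(\mathfrak{X})$-valued reproducing kernel $K_\gamma(z)$. Then for any $\beta\in\mathbb{C}$, $$R_\beta\mathcal{H}_\beta\subseteq\mathcal{H}\quad\text{if and only if}\quad R_\beta\mathcal{H}_\beta=\mathcal{D}.$$ Moreover, if this condition holds for some $\beta\in\mathbb{C}$, then: (1) $R_\beta$ is a bounded linear operator from $\mathcal{H}_\beta$ to $\mathcal{H}$; (2) $\operatorname{rng}(\mathfrak{T}-\beta I)=\mathcal{H}_\beta$; (3) $\beta$ is a point of regular type for $\mathfrak{T}$.
   Context: $\mathfrak{X}$ is a complex separable Hilbert space. For $\beta\in\mathbb{C}$, $\mathcal{H}_\beta=\{f\in\mathcal{H}: f(\beta)=0\}$. The generalized backward shift $R_\beta$ acts on $f$ with $f(\beta)=0$ by $(R_\beta f)(z)=\frac{f(z)}{z-\beta}$ for $z\neq\beta$ and $(R_\beta f)(\beta)=f'(\beta)$. The multiplication operator $\mathfrak{T}$ has domain $\mathcal{D}=\{f\in\mathcal{H}: zf(z)\in\mathcal{H}\}$ and $(\mathfrak{T}f)(z)=zf(z)$. A number $\gamma$ is a point of regular type of $\mathfrak{T}$ if there is $C_\gamma>0$ with $\|(\mathfrak{T}-\gamma I)f\|\ge C_\gamma\|f\|$ for all $f\in\mathcal{D}$. *)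

From Stdlib Require Import Reals ClassicalEpsilon FunctionalExtensionality.
From Coquelicot Require Import Coquelicot.
Open Scope R_scope.

Record CHilbert := {
  hs_car :> Type;
  hs_zero : hs_car;
  hs_add : hs_car -> hs_car -> hs_car;
  hs_opp : hs_car -> hs_car;
  hs_scal : C -> hs_car -> hs_car;
  hs_inner : hs_car -> hs_car -> C;
  hs_addA : forall x y z, hs_add x (hs_add y z) = hs_add (hs_add x y) z;
  hs_addC : forall x y, hs_add x y = hs_add y x;
  hs_add0 : forall x, hs_add x hs_zero = x;
  hs_addN : forall x, hs_add x (hs_opp x) = hs_zero;
  hs_scalA : forall a b x, hs_scal a (hs_scal b x) = hs_scal (Cmult a b) x;
  hs_scal1 : forall x, hs_scal (RtoC 1) x = x;
  hs_scalDr : forall a x y, hs_scal a (hs_add x y) = hs_add (hs_scal a x) (hs_scal a y);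
  hs_scalDl : forall a b x, hs_scal (Cplus a b) x = hs_add (hs_scal a x) (hs_scal b x);
  hs_innerDl : forall x y z, hs_inner (hs_add x y) z = Cplus (hs_inner x z) (hs_inner y z);
  hs_innerZl : forall a x y, hs_inner (hs_scal a x) y = Cmult a (hs_inner x y);
  hs_innerC : forall x y, hs_inner y x = Cconj (hs_inner x y);
  hs_inner_ge0 : forall x, 0 <= Re (hs_inner x x);
  hs_inner_eq0 : forall x, hs_inner x x = RtoC 0 -> x = hs_zero;
  hs_complete : forall u : nat -> hs_car,
    (forall eps, 0 < eps -> exists N, forall m n, (N <= m)%nat -> (N <= n)%nat ->
        sqrt (Re (hs_inner (hs_add (u m) (hs_opp (u n))) (hs_add (u m) (hs_opp (u n))))) < eps) ->
    exists l, forall eps, 0 < eps -> exists N, forall n, (N <= n)%nat ->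
        sqrt (Re (hs_inner (hs_add (u n) (hs_opp l)) (hs_add (u n) (hs_opp l)))) < eps;
  hs_separable : exists e : nat -> hs_car, forall x eps, 0 < eps -> exists n,
        sqrt (Re (hs_inner (hs_add x (hs_opp (e n))) (hs_add x (hs_opp (e n))))) < eps
}.

Arguments hs_zero {c}.
Arguments hs_add {c}.
Arguments hs_opp {c}.
Arguments hs_scal {c}.
Arguments hs_inner {c}.

Definition hnorm {X : CHilbert} (x : X) : R := sqrt (Re (hs_inner x x)).

Section Funs.
Variable X : CHilbert.

Definition is_derivX (f : C -> X) (z : C) (d : X) : Prop :=
  forall eps, 0 < eps -> exists delta, 0 < delta /\
    forall h : C, h <> RtoC 0 -> Cmod h < delta ->
      hnorm (hs_add (hs_scal (Cinv h) (hs_add (f (Cplus z h)) (hs_opp (f z)))) (hs_opp d)) < eps.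

Definition entireX (f : C -> X) : Prop := forall z, exists d, is_derivX f z d.

(* the derivative (chosen; unique for differentiable f) *)
Definition derivX (f : C -> X) (z : C) : X :=
  epsilon (inhabits (@hs_zero X)) (fun d => is_derivX f z d).

Definition fzero : C -> X := fun _ => hs_zero.
Definition fadd (f g : C -> X) : C -> X := fun z => hs_add (f z) (g z).
Definition fopp (f : C -> X) : C -> X := fun z => hs_opp (f z).
Definition fscal (a : C) (f : C -> X) : C -> X := fun z => hs_scal a (f z).

(** A space H (given by membership predicate [mem] and inner product [ip])
    which is a Hilbert space of X-valued entire functions, with pointwise
    vector space operations, possessing a B(X)-valued reproducing kernel
    K : gamma |-> (z |-> K_gamma(z)), K_gamma(z) u = K gamma z u. *)
Record is_RKHS (mem : (C -> X) -> Prop) (ip : (C -> X) -> (C -> X) -> C)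
    (K : C -> C -> X -> X) : Prop := {
  rk_zero : mem fzero;
  rk_add : forall f g, mem f -> mem g -> mem (fadd f g);
  rk_scal : forall a f, mem f -> mem (fscal a f);
  rk_innerDl : forall f g h, mem f -> mem g -> mem h ->
     ip (fadd f g) h = Cplus (ip f h) (ip g h);
  rk_innerZl : forall a f g, mem f -> mem g -> ip (fscal a f) g = Cmult a (ip f g);
  rk_innerC : forall f g, mem f -> mem g -> ip g f = Cconj (ip f g);
  rk_inner_ge0 : forall f, mem f -> 0 <= Re (ip f f);
  rk_inner_eq0 : forall f, mem f -> ip f f = RtoC 0 -> f = fzero;
  rk_complete : forall u : nat -> C -> X, (forall n, mem (u n)) ->
    (forall eps, 0 < eps -> exists N, forall m n, (N <= m)%nat -> (N <= n)%nat ->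
        sqrt (Re (ip (fadd (u m) (fopp (u n))) (fadd (u m) (fopp (u n))))) < eps) ->
    exists l, mem l /\ forall eps, 0 < eps -> exists N, forall n, (N <= n)%nat ->
        sqrt (Re (ip (fadd (u n) (fopp l)) (fadd (u n) (fopp l)))) < eps;
  rk_entire : forall f, mem f -> entireX f;
  rk_K_linear : forall gamma z a b u v,
     K gamma z (hs_add (hs_scal a u) (hs_scal b v))
     = hs_add (hs_scal a (K gamma z u)) (hs_scal b (K gamma z v));
  rk_K_bounded : forall gamma z, exists M, 0 <= M /\
     forall u, hnorm (K gamma z u) <= M * hnorm u;
  rk_K_mem : forall gamma u, mem (fun z => K gamma z u);
  rk_reproducing : forall gamma u f, mem f ->
     ip f (fun z => K gamma z u) = hs_inner (f gamma) u
}.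

Section Ops.
Variable mem : (C -> X) -> Prop.
Variable ip : (C -> X) -> (C -> X) -> C.

Definition normH (f : C -> X) : R := sqrt (Re (ip f f)).

Definition Hsub (beta : C) (f : C -> X) : Prop := mem f /\ f beta = hs_zero.

Definition Rshift (beta : C) (f : C -> X) : C -> X := fun z =>
  if excluded_middle_informative (z = beta) then derivX f beta
  else hs_scal (Cinv (Cminus z beta)) (f z).

(* domain D of the multiplication operator T *)
Definition Dom (f : C -> X) : Prop := mem f /\ mem (fun z => hs_scal z (f z)).

Definition Tmul (f : C -> X) : C -> X := fun z => hs_scal z (f z).

Definition Tshift (gamma : C) (f : C -> X) : C -> X :=
  fadd (Tmul f) (fopp (fscal gamma f)).

Definition regular_type (gamma : C) : Prop :=
  exists c, 0 < c /\ forall f, Dom f -> normH (Tshift gamma f) >= c * normH f.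

Definition Rshift_bounded_linear (beta : C) : Prop :=
  (forall f, Hsub beta f -> mem (Rshift beta f)) /\
  (forall a b f g, Hsub beta f -> Hsub beta g ->
     Rshift beta (fadd (fscal a f) (fscal b g))
     = fadd (fscal a (Rshift beta f)) (fscal b (Rshift beta g))) /\
  (exists M, 0 <= M /\ forall f, Hsub beta f -> normH (Rshift beta f) <= M * normH f).

End Ops.
End Funs.

From Stdlib Require Import Reals Lra Lia Psatz List.
From Stdlib Require Import Classical ClassicalEpsilon FunctionalExtensionality.
From Coquelicot Require Import Coquelicot.
Open Scope R_scope.

(* R_beta is bounded by way of the domain B of its adjoint, the h for which
   f |-> <R_beta f, h> is bounded on H_beta.  B contains the kernel functions K_gam u with
   gam <> beta; the uniform boundedness principle (Sokal's gliding hump) makes the bounds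
   on B uniform, hence B is closed; and a vector orthogonal to B vanishes off beta, hence
   at beta by continuity.  So B = H, and h = R_beta f gives |R_beta f| <= M |f|.  The
   remaining claims follow from R_beta (T - beta I) = I on D and (T - beta I) R_beta = I
   on H_beta. *)

Lemma sup_approx (E : R -> Prop) : (exists x, E x) -> (exists b, forall x, E x -> x <= b) ->
  exists m, (forall x, E x -> x <= m) /\ forall eps, 0 < eps -> exists x, E x /\ m - eps < x.
Proof.
  intros Hne Hb. destruct (completeness E Hb Hne) as [m [Hub Hlub]].
  exists m. split; auto. intros eps Heps. apply NNPP. intro Hn.
  assert (m <= m - eps); [|lra].
  apply Hlub. intros x Ex. apply Rnot_lt_le. intro. apply Hn. eauto.
Qed.

Lemma pow_eventually_lt q eps : 0 <= q < 1 -> 0 < eps ->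
  exists N, forall n, (N <= n)%nat -> q ^ n < eps.
Proof.
  intros Hq Heps. destruct (pow_lt_1_zero q) with (y := eps) as [N HN]; auto.
  { rewrite Rabs_pos_eq; lra. }
  exists N. intros n Hn. specialize (HN n Hn). rewrite Rabs_pos_eq in HN; auto.
  apply pow_le; lra.
Qed.

Lemma sqrt_plus_le a b : 0 <= a -> 0 <= b -> sqrt (a + b) <= sqrt a + sqrt b.
Proof.
  intros Ha Hb. pose proof (sqrt_pos a). pose proof (sqrt_pos b).
  rewrite <- (sqrt_Rsqr (sqrt a + sqrt b)) by lra. apply sqrt_le_1_alt.
  unfold Rsqr. pose proof (sqrt_sqrt a Ha). pose proof (sqrt_sqrt b Hb). nra.
Qed.

Lemma Re_le_Cmod z : Re z <= Cmod z.
Proof. pose proof (re_le_Cmod z). pose proof (Rle_abs (Re z)). lra. Qed.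

Lemma Cmod_sub_ge a b : Cmod a - Cmod b <= Cmod (Cminus a b).
Proof.
  pose proof (Cmod_triangle (Cminus a b) b) as H.
  replace (Cplus (Cminus a b) b) with a in H by ring. lra.
Qed.

Lemma Cminus_neq0 z b : z <> b -> Cminus z b <> RtoC 0.
Proof. intros H E. apply H. replace z with (Cplus (Cminus z b) b) by ring. rewrite E. ring. Qed.

(* A complex inner product on the subset [P] of [V]: the vector-space laws hold on all
   of [V] (as for pointwise operations on functions), the inner-product laws on [P]. *)
Set Implicit Arguments.
Record is_pre_hilbert (V : Type) (zero : V) (add : V -> V -> V) (opp : V -> V)
    (scal : C -> V -> V) (inner : V -> V -> C) (P : V -> Prop) : Prop := {
  ph_addA : forall x y z, add x (add y z) = add (add x y) z;
  ph_addC : forall x y, add x y = add y x;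
  ph_add0 : forall x, add x zero = x;
  ph_addN : forall x, add x (opp x) = zero;
  ph_scalA : forall a b x, scal a (scal b x) = scal (Cmult a b) x;
  ph_scal1 : forall x, scal (RtoC 1) x = x;
  ph_scalDr : forall a x y, scal a (add x y) = add (scal a x) (scal a y);
  ph_scalDl : forall a b x, scal (Cplus a b) x = add (scal a x) (scal b x);
  ph_mem0 : P zero;
  ph_mem_add : forall x y, P x -> P y -> P (add x y);
  ph_mem_scal : forall a x, P x -> P (scal a x);
  ph_innerDl : forall x y z, P x -> P y -> P z ->
    inner (add x y) z = Cplus (inner x z) (inner y z);
  ph_innerZl : forall a x y, P x -> P y -> inner (scal a x) y = Cmult a (inner x y);
  ph_innerC : forall x y, P x -> P y -> inner y x = Cconj (inner x y);
  ph_inner_ge0 : forall x, P x -> 0 <= Re (inner x x);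
  ph_inner_eq0 : forall x, P x -> inner x x = RtoC 0 -> x = zero
}.
Unset Implicit Arguments.

Definition vsub {V : Type} (add : V -> V -> V) (opp : V -> V) (x y : V) : V := add x (opp y).
Definition ip_sqnorm {V : Type} (inner : V -> V -> C) (x : V) : R := Re (inner x x).
Definition ip_norm {V : Type} (inner : V -> V -> C) (x : V) : R := sqrt (ip_sqnorm inner x).

Section VectorSpace.
Context {V : Type} {zero : V} {add : V -> V -> V} {opp : V -> V}
  {scal : C -> V -> V} {inner : V -> V -> C} {P : V -> Prop}.
Hypothesis ax : is_pre_hilbert zero add opp scal inner P.
Let addA := ph_addA ax.
Let addC := ph_addC ax.
Let add0 := ph_add0 ax.
Let addN := ph_addN ax.
Let scalA := ph_scalA ax.
Let scal1 := ph_scal1 ax.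
Let scalDr := ph_scalDr ax.
Let scalDl := ph_scalDl ax.

Lemma add0l x : add zero x = x.
Proof. rewrite addC; apply add0. Qed.

Lemma scal0l x : scal (RtoC 0) x = zero.
Proof.
  assert (Hd : add (scal (RtoC 0) x) (scal (RtoC 0) x) = scal (RtoC 0) x).
  { rewrite <- scalDl. f_equal. ring. }
  set (s := scal (RtoC 0) x) in *.
  rewrite <- (addN s). rewrite <- Hd at 2. rewrite <- addA, addN, add0. reflexivity.
Qed.

Lemma scal0r a : scal a zero = zero.
Proof. rewrite <- (scal0l zero) at 1. rewrite scalA, Cmult_0_r. apply scal0l. Qed.

Lemma opp_scal x : opp x = scal (RtoC (-1)) x.
Proof.
  assert (H : add x (scal (RtoC (-1)) x) = zero).
  { rewrite <- (scal1 x) at 1. rewrite <- scalDl.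
    replace (Cplus (RtoC 1) (RtoC (-1))) with (RtoC 0) by ring. apply scal0l. }
  rewrite <- (add0 (opp x)), <- H, addA, (addC (opp x) x), addN, add0l. reflexivity.
Qed.

Lemma vsub_eq x y : vsub add opp x y = zero -> x = y.
Proof.
  unfold vsub; intro H.
  rewrite <- (add0 x), <- (addN y), (addC y), addA, H, add0l. reflexivity.
Qed.

(** Linear combinations are normalised by reflection: a vector expression over
    a list of atoms is mapped to its coefficient vector. *)
Inductive vexpr : Type :=
  | VVar (n : nat) | VZero | VAdd (a b : vexpr) | VOpp (a : vexpr) | VScal (c : C) (a : vexpr).

Fixpoint vinterp (l : list V) (e : vexpr) : V :=
  match e with
  | VVar n => nth n l zero
  | VZero => zero
  | VAdd a b => add (vinterp l a) (vinterp l b)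
  | VOpp a => opp (vinterp l a)
  | VScal c a => scal c (vinterp l a)
  end.

Fixpoint vcoef (e : vexpr) (n : nat) : C :=
  match e with
  | VVar m => if Nat.eqb n m then RtoC 1 else RtoC 0
  | VZero => RtoC 0
  | VAdd a b => Cplus (vcoef a n) (vcoef b n)
  | VOpp a => Copp (vcoef a n)
  | VScal c a => Cmult c (vcoef a n)
  end.

Fixpoint lincomb (l : list V) (f : nat -> C) : V :=
  match l with
  | nil => zero
  | v :: l' => add (scal (f O) v) (lincomb l' (fun i => f (S i)))
  end.

Lemma lincomb_ext l : forall f g, (forall i, (i < length l)%nat -> f i = g i) ->
  lincomb l f = lincomb l g.
Proof.
  induction l as [|v l IH]; intros f g H; simpl; auto.
  rewrite (H O) by (simpl; lia). f_equal. apply IH. intros; apply H; simpl; lia.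
Qed.

Lemma lincomb_add l : forall f g,
  lincomb l (fun i => Cplus (f i) (g i)) = add (lincomb l f) (lincomb l g).
Proof.
  induction l as [|v l IH]; intros; simpl.
  - now rewrite add0.
  - rewrite IH, scalDl, <- !addA. f_equal. rewrite !addA. f_equal. apply addC.
Qed.

Lemma lincomb_scal l : forall c f, lincomb l (fun i => Cmult c (f i)) = scal c (lincomb l f).
Proof.
  induction l as [|v l IH]; intros; simpl.
  - now rewrite scal0r.
  - now rewrite IH, scalDr, scalA.
Qed.

Lemma lincomb_opp l f : lincomb l (fun i => Copp (f i)) = opp (lincomb l f).
Proof.
  rewrite opp_scal, <- lincomb_scal. apply lincomb_ext. intros; ring.
Qed.

Lemma lincomb_zero l : forall f, (forall i, f i = RtoC 0) -> lincomb l f = zero.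
Proof.
  induction l as [|v l IH]; intros f H; simpl; auto.
  rewrite H, scal0l, add0l. apply IH. auto.
Qed.

Lemma lincomb_var l : forall n,
  lincomb l (fun i => if Nat.eqb i n then RtoC 1 else RtoC 0) = nth n l zero.
Proof.
  induction l as [|v l IH]; intros [|n]; simpl; auto.
  - rewrite scal1, (lincomb_zero l), add0; auto.
  - rewrite scal0l, add0l. apply IH.
Qed.

Lemma vinterp_lincomb l e : vinterp l e = lincomb l (vcoef e).
Proof.
  induction e; simpl.
  - symmetry. apply lincomb_var.
  - symmetry. apply lincomb_zero. auto.
  - now rewrite IHe1, IHe2, lincomb_add.
  - now rewrite IHe, lincomb_opp.
  - now rewrite IHe, lincomb_scal.
Qed.

Lemma vinterp_eq l e1 e2 : (forall i, (i < length l)%nat -> vcoef e1 i = vcoef e2 i) ->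
  vinterp l e1 = vinterp l e2.
Proof. intros. rewrite !vinterp_lincomb. now apply lincomb_ext. Qed.

End VectorSpace.

Ltac vatoms zero add opp scal t l :=
  lazymatch t with
  | zero => l
  | add ?a ?b => let l := vatoms zero add opp scal a l in vatoms zero add opp scal b l
  | opp ?a => vatoms zero add opp scal a l
  | scal _ ?a => vatoms zero add opp scal a l
  | _ =>
    let rec insert l :=
      lazymatch l with
      | nil => constr:(t :: nil)
      | t :: _ => l
      | ?y :: ?l' => let l'' := insert l' in constr:(y :: l'')
      end in
    insert l
  end.

Ltac vreify zero add opp scal l t :=
  lazymatch t with
  | zero => constr:(VZero)
  | add ?a ?b =>
    let ra := vreify zero add opp scal l a in
    let rb := vreify zero add opp scal l b in constr:(VAdd ra rb)
  | opp ?a => let ra := vreify zero add opp scal l a in constr:(VOpp ra)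
  | scal ?c ?a => let ra := vreify zero add opp scal l a in constr:(VScal c ra)
  | _ =>
    let rec index l :=
      lazymatch l with
      | t :: _ => constr:(O)
      | _ :: ?l' => let n := index l' in constr:(S n)
      end in
    let n := index l in constr:(VVar n)
  end.

(** [vring ax] proves an identity between linear combinations in the space
    described by [ax], leaving the coefficient equations that [ring] cannot close. *)
Ltac vring ax :=
  lazymatch type of ax with
  | @is_pre_hilbert ?V ?zero ?add ?opp ?scal _ _ =>
    unfold vsub;
    lazymatch goal with
    | |- ?a = ?b =>
      let l := vatoms zero add opp scal a (@nil V) in
      let l := vatoms zero add opp scal b l in
      let ra := vreify zero add opp scal l a in
      let rb := vreify zero add opp scal l b in
      change (vinterp (zero := zero) (add := add) (opp := opp) (scal := scal) l ra
              = vinterp (zero := zero) (add := add) (opp := opp) (scal := scal) l rb);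
      apply (vinterp_eq ax); simpl length;
      let i := fresh "i" in let Hi := fresh "Hi" in intros i Hi;
      repeat (destruct i as [|i]; [simpl; try ring | try (exfalso; lia)])
    end
  end.

Definition converges_to {V : Type} (add : V -> V -> V) (opp : V -> V) (inner : V -> V -> C)
  (u : nat -> V) (l : V) : Prop :=
  forall eps, 0 < eps -> exists N, forall n, (N <= n)%nat ->
    ip_norm inner (vsub add opp (u n) l) < eps.

Definition cauchy {V : Type} (add : V -> V -> V) (opp : V -> V) (inner : V -> V -> C)
  (u : nat -> V) : Prop :=
  forall eps, 0 < eps -> exists N, forall m n, (N <= m)%nat -> (N <= n)%nat ->
    ip_norm inner (vsub add opp (u m) (u n)) < eps.

Definition is_complete {V : Type} (add : V -> V -> V) (opp : V -> V) (inner : V -> V -> C)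
  (P : V -> Prop) : Prop :=
  forall u, (forall n, P (u n)) -> cauchy add opp inner u ->
    exists l, P l /\ converges_to add opp inner u l.

Set Implicit Arguments.
Record is_closed_subspace (V : Type) (zero : V) (add : V -> V -> V) (opp : V -> V)
    (scal : C -> V -> V) (inner : V -> V -> C) (P S : V -> Prop) : Prop := {
  subspace_incl : forall x, S x -> P x;
  subspace_zero : S zero;
  subspace_comb : forall a b x y, S x -> S y -> S (add (scal a x) (scal b y));
  subspace_closed : forall u l, (forall n, S (u n)) -> P l ->
    converges_to add opp inner u l -> S l
}.
Unset Implicit Arguments.

Section PreHilbert.
Context {V : Type} {zero : V} {add : V -> V -> V} {opp : V -> V}
  {scal : C -> V -> V} {inner : V -> V -> C} {P : V -> Prop}.
Hypothesis ax : is_pre_hilbert zero add opp scal inner P.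
Hypothesis complete : is_complete add opp inner P.
Let scal1 := ph_scal1 ax.
Let mem0 := ph_mem0 ax.
Let mem_add := ph_mem_add ax.
Let mem_scal := ph_mem_scal ax.
Let innerDl := ph_innerDl ax.
Let innerZl := ph_innerZl ax.
Let innerC := ph_innerC ax.
Local Notation sub := (vsub add opp).
Local Notation norm := (ip_norm inner).
Local Notation sqnorm := (ip_sqnorm inner).
Local Notation converges := (converges_to add opp inner).

Lemma mem_sub x y : P x -> P y -> P (sub x y).
Proof. intros. unfold vsub. rewrite (opp_scal ax). auto. Qed.

Lemma mem_comb a b x y : P x -> P y -> P (add (scal a x) (scal b y)).
Proof. auto. Qed.

Lemma inner0l y : P y -> inner zero y = RtoC 0.
Proof. intros. rewrite <- (scal0l ax zero), innerZl by auto. apply Cmult_0_l. Qed.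

Lemma innerDr x y z : P x -> P y -> P z -> inner x (add y z) = Cplus (inner x y) (inner x z).
Proof.
  intros. rewrite innerC, innerDl, (innerC x y), (innerC x z) by auto.
  destruct (inner y x), (inner z x). apply injective_projections; simpl; ring.
Qed.

Lemma innerZr a x y : P x -> P y -> inner x (scal a y) = Cmult (Cconj a) (inner x y).
Proof.
  intros. rewrite innerC, innerZl, (innerC x y) by auto.
  destruct (inner y x), a. apply injective_projections; simpl; ring.
Qed.

Lemma inner0r x : P x -> inner x zero = RtoC 0.
Proof. intros. rewrite innerC, inner0l by auto. apply injective_projections; simpl; ring. Qed.

Lemma inner_self_Im x : P x -> Im (inner x x) = 0.
Proof.
  intros Hx. pose proof (innerC x x Hx Hx) as E.
  destruct (inner x x) as [r i]. unfold Im. simpl in *. injection E. lra.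
Qed.

Lemma sqnorm_ge0 x : P x -> 0 <= sqnorm x.
Proof. apply (ph_inner_ge0 ax). Qed.

Lemma norm_sqr x : P x -> norm x * norm x = sqnorm x.
Proof. intros. apply sqrt_sqrt, sqnorm_ge0; auto. Qed.

Lemma norm_zero : norm zero = 0.
Proof. unfold ip_norm, ip_sqnorm. rewrite inner0l by auto. apply sqrt_0. Qed.

Lemma norm_eq0 x : P x -> norm x = 0 -> x = zero.
Proof.
  intros Hx H0. apply (ph_inner_eq0 ax); auto.
  assert (Hre : sqnorm x = 0) by (rewrite <- norm_sqr, H0 by auto; ring).
  pose proof (inner_self_Im x Hx). unfold ip_sqnorm, Re, Im in *.
  destruct (inner x x); simpl in *; subst; reflexivity.
Qed.

Lemma sqnorm_add_scal x y a : P x -> P y ->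
  sqnorm (add x (scal a y)) = sqnorm x + 2 * (fst a * fst (inner x y) + snd a * snd (inner x y))
    + (fst a ^ 2 + snd a ^ 2) * sqnorm y.
Proof.
  intros. unfold ip_sqnorm.
  rewrite innerDl, !innerDr, !innerZl, !innerZr, (innerC x y) by auto.
  pose proof (inner_self_Im y H0). unfold Im in *.
  destruct (inner x y), (inner y y), (inner x x), a. simpl in *. subst. ring.
Qed.

Lemma sqnorm_scal a x : P x -> sqnorm (scal a x) = (fst a ^ 2 + snd a ^ 2) * sqnorm x.
Proof.
  intros. unfold ip_sqnorm. rewrite innerZl, innerZr by auto.
  pose proof (inner_self_Im x H). unfold Im in *.
  destruct (inner x x), a. simpl in *. subst. ring.
Qed.

Lemma Cauchy_Schwarz x y : P x -> P y -> Cmod (inner x y) <= norm x * norm y.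
Proof.
  intros Hx Hy. unfold Cmod, ip_norm.
  rewrite <- sqrt_mult by (apply sqnorm_ge0; auto). apply sqrt_le_1_alt.
  set (m := fst (inner x y) ^ 2 + snd (inner x y) ^ 2).
  (* the quadratic t |-> sqnorm (x - t <x, y> y) is nonnegative *)
  assert (Hq : forall t, 0 <= sqnorm x - 2 * t * m + t ^ 2 * m * sqnorm y).
  { intro t.
    pose proof (sqnorm_ge0 _ (mem_add _ _ Hx (mem_scal (RtoC (-t) * inner x y)%C _ Hy))) as G.
    rewrite sqnorm_add_scal in G by auto. unfold m.
    destruct (inner x y) as [c1 c2]; simpl in *. nra. }
  assert (Hm : 0 <= m) by (unfold m; nra).
  pose proof (sqnorm_ge0 x Hx). pose proof (sqnorm_ge0 y Hy).
  destruct (Req_dec (sqnorm y) 0) as [E|E].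
  - destruct (Req_dec m 0) as [E2|E2]; [rewrite E2; nra|].
    specialize (Hq ((sqnorm x + 1) / (2 * m))). rewrite E in Hq.
    replace (2 * ((sqnorm x + 1) / (2 * m)) * m) with (sqnorm x + 1) in Hq by (field; lra). nra.
  - specialize (Hq (/ sqnorm y)).
    replace ((/ sqnorm y) ^ 2 * m * sqnorm y) with (m / sqnorm y) in Hq by (field; lra).
    assert (0 < sqnorm y) by lra.
    apply Rmult_le_compat_r with (r := sqnorm y) in Hq; [|lra].
    replace ((sqnorm x - 2 * / sqnorm y * m + m / sqnorm y) * sqnorm y)
      with (sqnorm x * sqnorm y - m) in Hq by (field; lra).
    fold m. lra.
Qed.

Lemma norm_scal a x : P x -> norm (scal a x) = Cmod a * norm x.
Proof.
  intros Hx. pose proof (sqnorm_ge0 x Hx). unfold ip_norm, Cmod.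
  rewrite sqnorm_scal by auto. apply sqrt_mult; nra.
Qed.

Lemma norm_triangle x y : P x -> P y -> norm (add x y) <= norm x + norm y.
Proof.
  intros Hx Hy. pose proof (Cauchy_Schwarz x y Hx Hy) as Hcs.
  pose proof (sqrt_pos (sqnorm x)). pose proof (sqrt_pos (sqnorm y)).
  assert (Hsq : sqnorm (add x y) <= (norm x + norm y) ^ 2).
  { rewrite <- (scal1 y) at 1. rewrite sqnorm_add_scal by auto. simpl fst; simpl snd.
    rewrite <- (norm_sqr x), <- (norm_sqr y) by auto.
    pose proof (Re_le_Cmod (inner x y)). unfold Re in *. nra. }
  unfold ip_norm at 1. rewrite <- (sqrt_pow2 (norm x + norm y)) by (unfold ip_norm; lra).
  apply sqrt_le_1_alt. exact Hsq.
Qed.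

Lemma norm_opp x : P x -> norm (opp x) = norm x.
Proof.
  intros. rewrite (opp_scal ax), norm_scal, Cmod_R, Rabs_m1 by auto. ring.
Qed.

Lemma norm_sub_sym x y : P x -> P y -> norm (sub x y) = norm (sub y x).
Proof.
  intros. replace (sub y x) with (opp (sub x y)) by vring ax.
  rewrite norm_opp; auto using mem_sub.
Qed.

Lemma norm_sub_triangle x y z : P x -> P y -> P z ->
  norm (sub x z) <= norm (sub x y) + norm (sub y z).
Proof.
  intros. replace (sub x z) with (add (sub x y) (sub y z)) by vring ax.
  apply norm_triangle; auto using mem_sub.
Qed.

Lemma norm_sub_zero x : norm (sub x zero) = norm x.
Proof. f_equal. vring ax. Qed.

Lemma Cmod_inner_sub_le x y z : P x -> P y -> P z ->
  Cmod (inner x y) <= Cmod (inner x z) + norm x * norm (sub z y).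
Proof.
  intros Hx Hy Hz.
  assert (E : inner x y = Cminus (inner x z) (inner x (sub z y))).
  { replace y with (add z (scal (RtoC (-1)) (sub z y))) at 1 by vring ax.
    rewrite innerDr, innerZr by (auto using mem_sub). apply injective_projections; simpl; ring. }
  rewrite E. eapply Rle_trans; [apply Cmod_triangle|]. rewrite Cmod_opp.
  pose proof (Cauchy_Schwarz x _ Hx (mem_sub z y Hz Hy)). lra.
Qed.

Lemma parallelogram x y : P x -> P y ->
  sqnorm (add x y) + sqnorm (sub x y) = 2 * sqnorm x + 2 * sqnorm y.
Proof.
  intros. replace (add x y) with (add x (scal (RtoC 1) y)) by vring ax.
  replace (sub x y) with (add x (scal (RtoC (-1)) y)) by vring ax.
  rewrite !sqnorm_add_scal by auto. simpl. ring.
Qed.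

Lemma le_of_converges u l x a b : converges u l -> 0 <= b ->
  (forall n, x <= a + b * norm (sub (u n) l)) -> x <= a.
Proof.
  intros Hc Hb Hx. apply Rle_plus_epsilon. intros eps Heps.
  destruct (Hc (eps / (b + 1))) as [N HN]; [apply Rdiv_lt_0_compat; lra|].
  specialize (HN N (le_n _)). specialize (Hx N).
  pose proof (sqrt_pos (sqnorm (sub (u N) l))). fold (norm (sub (u N) l)) in *.
  assert (b * norm (sub (u N) l) <= eps); [|lra].
  apply Rle_trans with ((b + 1) * (eps / (b + 1))); [nra|]. right. field. lra.
Qed.

Lemma converges_norm_sub_le g u l r : P g -> (forall n, P (u n)) -> P l -> converges u l ->
  (forall eps, 0 < eps -> exists N, forall n, (N <= n)%nat -> norm (sub g (u n)) < r + eps) ->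
  norm (sub g l) <= r.
Proof.
  intros Hg Hu Hl Hc Hb. apply Rnot_lt_le. intro Hlt.
  set (gap := norm (sub g l) - r).
  destruct (Hc (gap / 2)) as [N1 HN1]; [unfold gap; lra|].
  destruct (Hb (gap / 2)) as [N2 HN2]; [unfold gap; lra|].
  specialize (HN1 (max N1 N2) (Nat.le_max_l _ _)). specialize (HN2 (max N1 N2) (Nat.le_max_r _ _)).
  pose proof (norm_sub_triangle g (u (max N1 N2)) l Hg (Hu _) Hl). unfold gap in *. lra.
Qed.

Lemma geometric_limit u : (forall n, P (u n)) ->
  (forall n, norm (sub (u (S n)) (u n)) <= (/ 3) ^ S n) ->
  exists l, P l /\ converges u l /\ forall n, norm (sub (u n) l) <= (/ 3) ^ n / 2.
Proof.
  intros Hu Hstep.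
  assert (Hpart : forall n k,
    norm (sub (u (n + k)%nat) (u n)) <= (/ 3) ^ n / 2 - (/ 3) ^ (n + k) / 2).
  { intros n k. induction k as [|k IH].
    - rewrite Nat.add_0_r. unfold vsub. rewrite (ph_addN ax), norm_zero. lra.
    - rewrite Nat.add_succ_r. eapply Rle_trans.
      { apply norm_sub_triangle with (y := u (n + k)%nat); auto. }
      pose proof (Hstep (n + k)%nat). simpl pow in *. lra. }
  assert (Hfar : forall n m, (n <= m)%nat -> norm (sub (u m) (u n)) <= (/ 3) ^ n / 2).
  { intros n m Hnm. replace m with (n + (m - n))%nat by lia.
    pose proof (Hpart n (m - n)%nat). pose proof (pow_le (/ 3) (n + (m - n)) ltac:(lra)). lra. }
  assert (Hcauchy : cauchy add opp inner u).
  { intros eps Heps. destruct (pow_eventually_lt (/ 3) eps) as [N HN]; [lra|auto|].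
    exists N. intros m n Hm Hn. destruct (Nat.le_ge_cases n m).
    - eapply Rle_lt_trans; [apply Hfar; auto|]. specialize (HN n Hn). lra.
    - rewrite norm_sub_sym by auto. eapply Rle_lt_trans; [apply Hfar; auto|].
      specialize (HN m Hm). lra. }
  destruct (complete u Hu Hcauchy) as [l [Hl Hconv]].
  exists l. split; [|split]; auto. intro n.
  apply (converges_norm_sub_le (u n) u); auto. intros eps Heps.
  exists n. intros k Hk. rewrite norm_sub_sym by auto. pose proof (Hfar n k Hk). lra.
Qed.

Section Subspace.
Context {S : V -> Prop}.
Hypothesis HS : is_closed_subspace zero add opp scal inner P S.

Lemma subspace_scal a x : S x -> S (scal a x).
Proof.
  intros Hx. replace (scal a x) with (add (scal a x) (scal (RtoC 0) x)) by vring ax.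
  apply (subspace_comb HS); auto.
Qed.

Lemma subspace_sub x y : S x -> S y -> S (sub x y).
Proof.
  intros Hx Hy.
  replace (sub x y) with (add (scal (RtoC 1) x) (scal (RtoC (-1)) y)) by vring ax.
  apply (subspace_comb HS); auto.
Qed.

End Subspace.

Section Projection.
Context {S : V -> Prop}.
Hypothesis HS : is_closed_subspace zero add opp scal inner P S.

Let S_mem s : S s -> P s := subspace_incl HS s.

Lemma distance_inf g : P g -> exists d, 0 <= d /\ (forall s, S s -> d <= sqnorm (sub g s)) /\
  forall eps, 0 < eps -> exists s, S s /\ sqnorm (sub g s) < d + eps.
Proof.
  intros Hg.
  destruct (sup_approx (fun r => exists s, S s /\ r = - sqnorm (sub g s))) as [m [Hub Happ]].
  - exists (- sqnorm (sub g zero)), zero. split; auto. apply (subspace_zero HS).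
  - exists 0. intros r [s [Hs ->]]. pose proof (sqnorm_ge0 _ (mem_sub g s Hg (S_mem s Hs))). lra.
  - exists (- m). split; [|split].
    + apply Rnot_lt_le. intro Hneg. destruct (Happ m) as [r [[s [Hs ->]] Hr]]; [lra|].
      pose proof (sqnorm_ge0 _ (mem_sub g s Hg (S_mem s Hs))). lra.
    + intros s Hs. assert (- sqnorm (sub g s) <= m) by eauto. lra.
    + intros eps Heps. destruct (Happ eps Heps) as [r [[s [Hs ->]] Hr]]. exists s. split; auto. lra.
Qed.

(* Apollonius: the midpoint of s and t lies in S, so it is no closer to g than d. *)
Lemma minimizing_close g d s t : P g -> (forall s, S s -> d <= sqnorm (sub g s)) -> S s -> S t ->
  sqnorm (sub s t) <= 2 * (sqnorm (sub g s) - d) + 2 * (sqnorm (sub g t) - d).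
Proof.
  intros Hg Hd Hs Ht.
  set (mid := add (scal (/ RtoC 2) s) (scal (/ RtoC 2) t)).
  assert (Hmid : S mid) by apply (subspace_comb HS _ _ _ _ Hs Ht).
  assert (E1 : sub s t = sub (sub g t) (sub g s)) by vring ax.
  assert (E2 : add (sub g t) (sub g s) = scal (RtoC 2) (sub g mid)).
  { unfold mid. vring ax; field. }
  assert (Hgs : P (sub g s)) by (apply mem_sub; auto).
  assert (Hgt : P (sub g t)) by (apply mem_sub; auto).
  pose proof (parallelogram _ _ Hgt Hgs) as Hpar.
  rewrite E2, sqnorm_scal in Hpar by (apply mem_sub; auto).
  rewrite E1. pose proof (Hd mid Hmid). simpl in Hpar. lra.
Qed.

Lemma minimizer_orthogonal g s : P g -> S s ->
  (forall t, S t -> sqnorm (sub g s) <= sqnorm (sub g t)) ->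
  forall k, S k -> inner (sub g s) k = RtoC 0.
Proof.
  intros Hg Hs Hmin k Hk.
  assert (Hw : P (sub g s)) by (apply mem_sub; auto).
  set (c := inner (sub g s) k).
  set (t := / (sqnorm k + 1)).
  assert (Hk0 : 0 <= sqnorm k) by (apply sqnorm_ge0; auto).
  assert (Ht : 0 < t) by (apply Rinv_0_lt_compat; lra).
  assert (Htk : t * sqnorm k < 1).
  { unfold t. apply Rmult_lt_reg_r with (sqnorm k + 1); [lra|].
    replace (/ (sqnorm k + 1) * sqnorm k * (sqnorm k + 1)) with (sqnorm k) by (field; lra). lra. }
  (* compare with the competitor s + t c k *)
  set (a := Cmult (RtoC (- t)) c).
  assert (E : add (sub g s) (scal a k) = sub g (add (scal (RtoC 1) s) (scal (Copp a) k)))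
    by vring ax.
  pose proof (Hmin _ (subspace_comb HS (RtoC 1) (Copp a) _ _ Hs Hk)) as Hle.
  rewrite <- E, sqnorm_add_scal in Hle by auto. fold c in Hle. unfold a in Hle. simpl in Hle.
  assert (Hc : fst c ^ 2 + snd c ^ 2 = 0).
  { assert (t * (fst c ^ 2 + snd c ^ 2) * (2 - t * sqnorm k) <= 0) by nra.
    destruct (Rle_lt_dec (fst c ^ 2 + snd c ^ 2) 0); [nra|].
    assert (0 < t * (fst c ^ 2 + snd c ^ 2) * (2 - t * sqnorm k)); [|lra].
    apply Rmult_lt_0_compat; [apply Rmult_lt_0_compat|]; lra. }
  apply injective_projections; simpl; nra.
Qed.

Theorem orthogonal_projection g : P g ->
  exists s, S s /\ forall k, S k -> inner (sub g s) k = RtoC 0.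
Proof.
  intros Hg. destruct (distance_inf g Hg) as [d [Hd0 [Hd Happ]]].
  destruct (choice (fun n s => S s /\ sqnorm (sub g s) < d + (/ 3) ^ n)) as [u Hu].
  { intro n. apply Happ. apply pow_lt. lra. }
  assert (HuP : forall n, P (u n)) by (intro n; apply S_mem, Hu).
  assert (Hcauchy : cauchy add opp inner u).
  { intros eps Heps. destruct (pow_eventually_lt (/ 3) (eps * eps / 4)) as [N HN]; [lra|nra|].
    exists N. intros m n Hm Hn.
    pose proof (minimizing_close g d (u m) (u n) Hg Hd (proj1 (Hu m)) (proj1 (Hu n))).
    pose proof (Hu m). pose proof (Hu n). specialize (HN m Hm) as HNm. specialize (HN n Hn).
    unfold ip_norm. rewrite <- (sqrt_pow2 eps) by lra. apply sqrt_lt_1_alt.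
    split; [apply sqnorm_ge0, mem_sub; auto|]. lra. }
  destruct (complete u HuP Hcauchy) as [s [HsP Hconv]].
  assert (Hs : S s) by (apply (subspace_closed HS) with u; auto; intro n; apply Hu).
  exists s. split; auto. apply minimizer_orthogonal; auto. intros t Ht.
  assert (Hle : norm (sub g s) <= sqrt d).
  { apply (converges_norm_sub_le g u); auto. intros eps Heps.
    destruct (pow_eventually_lt (/ 3) (eps * eps)) as [N HN]; [lra|nra|].
    exists N. intros n Hn. specialize (HN n Hn). pose proof (pow_le (/ 3) n ltac:(lra)).
    unfold ip_norm. eapply Rle_lt_trans.
    { apply sqrt_le_1_alt. left. apply (Hu n). }
    eapply Rle_lt_trans; [apply sqrt_plus_le; auto|]. apply Rplus_lt_compat_l.
    rewrite <- (sqrt_pow2 eps) by lra. apply sqrt_lt_1_alt. split; auto. lra. }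
  pose proof (Hd t Ht). rewrite <- norm_sqr by (apply mem_sub; auto).
  pose proof (sqrt_pos (sqnorm (sub g s))). pose proof (sqrt_sqrt d Hd0).
  pose proof (sqrt_pos d). fold (norm (sub g s)) in *. nra.
Qed.

End Projection.

Section UniformBoundedness.
Context {W : V -> Prop}.
Hypothesis HW : is_closed_subspace zero add opp scal inner P W.
Context {I : Type}.
Variable ell : I -> V -> C.
Hypothesis ell_linear : forall i a b x y, W x -> W y ->
  ell i (add (scal a x) (scal b y)) = Cplus (Cmult a (ell i x)) (Cmult b (ell i y)).
Hypothesis ell_bounded : forall i, exists c, forall x, W x -> Cmod (ell i x) <= c * ip_norm inner x.
Hypothesis ell_pointwise_bounded : forall x, W x -> exists b, forall i, Cmod (ell i x) <= b.

Let W_mem x : W x -> P x := subspace_incl HW x.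
Let W_zero : W zero := subspace_zero HW.

Lemma ell_scal i a x : W x -> ell i (scal a x) = Cmult a (ell i x).
Proof.
  intros Hx. replace (scal a x) with (add (scal a x) (scal (RtoC 0) x)) by vring ax.
  rewrite ell_linear by auto. ring.
Qed.

Lemma ell_zero i : ell i zero = RtoC 0.
Proof. rewrite <- (scal0l ax zero) at 1. rewrite ell_scal by auto. apply Cmult_0_l. Qed.

Lemma functional_norm i : exists m, 0 <= m /\ (forall x, W x -> Cmod (ell i x) <= m * norm x) /\
  forall eps, 0 < eps -> exists x, W x /\ norm x <= 1 /\ m - eps < Cmod (ell i x).
Proof.
  destruct (ell_bounded i) as [c Hc].
  destruct (sup_approx (fun r => exists x, W x /\ norm x <= 1 /\ r = Cmod (ell i x)))
    as [m [Hub Happ]].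
  - exists (Cmod (ell i zero)), zero. rewrite norm_zero. repeat split; auto. lra.
  - exists (Rmax c 0). intros r [x [Hx [Hn ->]]]. eapply Rle_trans; [apply Hc; auto|].
    pose proof (sqrt_pos (sqnorm x)). pose proof (Rmax_l c 0). pose proof (Rmax_r c 0).
    unfold ip_norm in *. nra.
  - assert (Hm0 : 0 <= m).
    { eapply Rle_trans; [apply Cmod_ge_0|]. apply Hub.
      exists zero. rewrite norm_zero. repeat split; auto. lra. }
    exists m. split; [|split]; auto.
    + intros x Hx. pose proof (sqrt_pos (sqnorm x)) as Hn0. fold (norm x) in Hn0.
      destruct (Req_dec (norm x) 0) as [Z|Z].
      * apply norm_eq0 in Z; auto. subst x.
        rewrite ell_zero, Cmod_0. nra.
      * assert (Hinv : 0 < / norm x) by (apply Rinv_0_lt_compat; lra).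
        assert (Hx' : Cmod (ell i (scal (RtoC (/ norm x)) x)) <= m).
        { apply Hub. exists (scal (RtoC (/ norm x)) x).
          split; [apply (subspace_scal HW); auto|split; [|reflexivity]].
          rewrite norm_scal, Cmod_R, Rabs_pos_eq by (auto; lra). field_simplify; lra. }
        rewrite ell_scal, Cmod_mult, Cmod_R, Rabs_pos_eq in Hx' by (auto; lra).
        apply Rmult_le_compat_r with (r := norm x) in Hx'; [|lra].
        replace (/ norm x * Cmod (ell i x) * norm x) with (Cmod (ell i x)) in Hx' by (field; lra).
        lra.
    + intros eps Heps. destruct (Happ eps Heps) as [r [[x [Hx [Hn ->]]] Hr]]. eauto.
Qed.

(* One of x + r z and x - r z gains at least r |ell z|, where z nearly attains the norm m. *)
Lemma gliding_hump_step i m x r : 0 < m -> 0 < r ->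
  (forall eps, 0 < eps -> exists z, W z /\ norm z <= 1 /\ m - eps < Cmod (ell i z)) -> W x ->
  exists x', W x' /\ norm (sub x' x) <= r /\ r * (3 / 4 * m) <= Cmod (ell i x').
Proof.
  intros Hm Hr Happ Hx. destruct (Happ (m / 4)) as [z [Hz [Hzn Hzm]]]; [lra|].
  set (x1 := add (scal (RtoC 1) x) (scal (RtoC r) z)).
  set (x2 := add (scal (RtoC 1) x) (scal (RtoC (- r)) z)).
  assert (D : Cminus (ell i x1) (ell i x2) = Cmult (RtoC (2 * r)) (ell i z)).
  { unfold x1, x2. rewrite !ell_linear by auto. apply injective_projections; simpl; ring. }
  pose proof (Cmod_triangle (ell i x1) (Copp (ell i x2))) as Htri.
  change (Cplus (ell i x1) (Copp (ell i x2))) with (Cminus (ell i x1) (ell i x2)) in Htri.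
  rewrite D, Cmod_opp, Cmod_mult, Cmod_R, Rabs_pos_eq in Htri by lra.
  assert (N1 : norm (sub x1 x) <= r).
  { replace (sub x1 x) with (scal (RtoC r) z) by (unfold x1; vring ax).
    rewrite norm_scal, Cmod_R, Rabs_pos_eq by (auto; lra). nra. }
  assert (N2 : norm (sub x2 x) <= r).
  { replace (sub x2 x) with (scal (RtoC (- r)) z) by (unfold x2; vring ax).
    rewrite norm_scal, Cmod_R, Rabs_left by (auto; lra). nra. }
  destruct (Rle_dec (r * Cmod (ell i z)) (Cmod (ell i x1))).
  - exists x1. split; [apply (subspace_comb HW); auto|split; auto]. nra.
  - exists x2. split; [apply (subspace_comb HW); auto|split; auto]. nra.
Qed.

(* x_(n+1) = x_n +- 3^-(n+1) z_n; the tail |x - x_(n+1)| <= 3^-(n+1) / 2 costs ell_n at most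
   two thirds of the 3/4 m_n 3^-(n+1) gained at step n + 1. *)
Lemma gliding_hump (idx : nat -> I) (m : nat -> R) : (forall n, 0 < m n) ->
  (forall n x, W x -> Cmod (ell (idx n) x) <= m n * norm x) ->
  (forall n eps, 0 < eps -> exists z, W z /\ norm z <= 1 /\ m n - eps < Cmod (ell (idx n) z)) ->
  exists x, W x /\ forall n, (/ 3) ^ S n * m n / 4 <= Cmod (ell (idx n) x).
Proof.
  intros Hm Hbound Happ.
  destruct (choice (fun (p : nat * V) x' => W (snd p) -> W x' /\
      norm (sub x' (snd p)) <= (/ 3) ^ S (fst p) /\
      (/ 3) ^ S (fst p) * (3 / 4 * m (fst p)) <= Cmod (ell (idx (fst p)) x'))) as [next Hnext].
  { intros [n x]. destruct (classic (W x)) as [Hx|Hx]; [|exists x; tauto].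
    destruct (gliding_hump_step (idx n) (m n) x ((/ 3) ^ S n)) as [x' Hx']; auto.
    - apply pow_lt. lra.
    - exists x'. auto. }
  set (u := nat_rect (fun _ => V) zero (fun n x => next (n, x))).
  assert (HuS : forall n, u (S n) = next (n, u n)) by reflexivity.
  assert (HuW : forall n, W (u n)).
  { induction n as [|n IH]; [apply W_zero|]. rewrite HuS. apply (Hnext (n, u n)), IH. }
  destruct (geometric_limit u) as [l [Hl [Hconv Hlim]]].
  - intro n. apply W_mem, HuW.
  - intro n. rewrite HuS. apply (Hnext (n, u n)), HuW.
  - assert (HlW : W l) by (apply (subspace_closed HW) with u; auto).
    exists l. split; auto. intro n.
    destruct (Hnext (n, u n) (HuW n)) as [_ [_ Hbig]]. rewrite <- HuS in Hbig. simpl fst in Hbig.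
    assert (HdW : W (sub (u (S n)) l)) by (apply (subspace_sub HW); auto).
    assert (E : ell (idx n) l = Cminus (ell (idx n) (u (S n))) (ell (idx n) (sub (u (S n)) l))).
    { replace l with (add (scal (RtoC 1) (u (S n))) (scal (RtoC (-1)) (sub (u (S n)) l))) at 1
        by vring ax.
      rewrite ell_linear by auto. ring. }
    pose proof (Hbound n _ HdW). pose proof (Hlim (S n)).
    pose proof (Cmod_sub_ge (ell (idx n) (u (S n))) (ell (idx n) (sub (u (S n)) l))).
    pose proof (Hm n). pose proof (pow_lt (/ 3) (S n) ltac:(lra)).
    rewrite E. nra.
Qed.

(* Otherwise choose ell_n with norm at least 4^(n+1); at the gliding hump point x,
   |ell_n x| >= (4/3)^(n+1) / 4 is unbounded in n. *)
Theorem uniform_boundedness : exists M, 0 <= M /\ forall i x, W x -> Cmod (ell i x) <= M * norm x.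
Proof.
  apply NNPP. intro Hno.
  assert (Hlarge : forall n, exists p : I * R, 4 ^ S n <= snd p /\
      (forall x, W x -> Cmod (ell (fst p) x) <= snd p * norm x) /\
      (forall eps, 0 < eps -> exists z, W z /\ norm z <= 1 /\ snd p - eps < Cmod (ell (fst p) z))).
  { intro n. assert (Hex : exists i x, W x /\ 4 ^ S n * norm x < Cmod (ell i x)).
    { apply NNPP. intro Hn. apply Hno. exists (4 ^ S n). split; [apply pow_le; lra|].
      intros i x Hx. apply Rnot_lt_le. intro. apply Hn. eauto. }
    destruct Hex as [i [x [Hx Hlt]]].
    destruct (functional_norm i) as [m [Hm0 [Hb Happ]]].
    exists (i, m). cbn [fst snd]. split; auto.
    pose proof (Hb x Hx). pose proof (sqrt_pos (sqnorm x)). fold (norm x) in *. nra. }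
  destruct (choice _ Hlarge) as [p Hp].
  destruct (gliding_hump (fun n => fst (p n)) (fun n => snd (p n))) as [x [Hx Hhump]].
  - intro n. pose proof (proj1 (Hp n)). pose proof (pow_lt 4 (S n) ltac:(lra)). lra.
  - intro n. apply Hp.
  - intro n. apply Hp.
  - destruct (ell_pointwise_bounded x Hx) as [b Hb].
    destruct (Pow_x_infinity (4 / 3)) with (b := 4 * b + 1) as [N HN].
    { rewrite Rabs_pos_eq; lra. }
    specialize (HN (S N) ltac:(lia)). rewrite Rabs_pos_eq in HN by (apply pow_le; lra).
    assert (E : (4 / 3) ^ S N = (/ 3) ^ S N * 4 ^ S N)
      by (rewrite <- Rpow_mult_distr; f_equal; field).
    pose proof (Hb (fst (p N))). pose proof (Hhump N). pose proof (proj1 (Hp N)).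
    pose proof (pow_lt (/ 3) (S N) ltac:(lra)). nra.
Qed.

End UniformBoundedness.

End PreHilbert.

Lemma CHilbert_pre_hilbert (X : CHilbert) :
  is_pre_hilbert (@hs_zero X) hs_add hs_opp hs_scal hs_inner (fun _ => True).
Proof.
  constructor; intros; auto using hs_addA, hs_addC, hs_add0, hs_addN, hs_scalA, hs_scal1,
    hs_scalDr, hs_scalDl, hs_innerDl, hs_innerZl, hs_innerC, hs_inner_ge0, hs_inner_eq0.
Qed.

Definition continuousX {X : CHilbert} (f : C -> X) (z : C) : Prop :=
  forall eps, 0 < eps -> exists delta, 0 < delta /\
    forall h, Cmod h < delta -> hnorm (vsub hs_add hs_opp (f (Cplus z h)) (f z)) < eps.

Section VectorFunctions.
Context {X : CHilbert}.
Let XA := CHilbert_pre_hilbert X.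
Local Notation xsub := (vsub (@hs_add X) hs_opp).
Local Notation xnorm := (ip_norm (@hs_inner X)).

Lemma hnorm_ip_norm (x : X) : hnorm x = xnorm x.
Proof. reflexivity. Qed.

Lemma xnorm_small_eq0 (x : X) : (forall eps, 0 < eps -> xnorm x < eps) -> x = hs_zero.
Proof.
  intros H. apply (norm_eq0 XA); auto. pose proof (sqrt_pos (ip_sqnorm hs_inner x)).
  destruct (Req_dec (xnorm x) 0) as [Z|Z]; auto. specialize (H (xnorm x)). unfold ip_norm in *. lra.
Qed.

Lemma is_derivX_unique f z d1 d2 : is_derivX X f z d1 -> is_derivX X f z d2 -> d1 = d2.
Proof.
  intros H1 H2. apply (vsub_eq XA), xnorm_small_eq0. intros eps Heps.
  destruct (H1 (eps / 2)) as [e1 [He1 G1]]; [lra|].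
  destruct (H2 (eps / 2)) as [e2 [He2 G2]]; [lra|].
  pose proof (Rmin_l e1 e2). pose proof (Rmin_r e1 e2). pose proof (Rmin_glb_lt e1 e2 0 He1 He2).
  set (h := RtoC (Rmin e1 e2 / 2)).
  assert (Hh : h <> RtoC 0) by (unfold h; intro E; injection E; lra).
  assert (Hmod : Cmod h = Rmin e1 e2 / 2) by (unfold h; rewrite Cmod_R, Rabs_pos_eq; lra).
  specialize (G1 h Hh ltac:(lra)). specialize (G2 h Hh ltac:(lra)).
  set (q := hs_scal (Cinv h) (hs_add (f (Cplus z h)) (hs_opp (f z)))) in *.
  pose proof (norm_sub_triangle XA d1 q d2 I I I) as Htri.
  rewrite (norm_sub_sym XA d1 q) in Htri by auto.
  rewrite !hnorm_ip_norm in *. unfold vsub in *. lra.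
Qed.

Lemma derivX_eq f z d : is_derivX X f z d -> derivX X f z = d.
Proof.
  intros H. apply (is_derivX_unique f z); auto.
  unfold derivX. apply epsilon_spec. exists d; auto.
Qed.

Lemma is_derivX_continuous f z d : is_derivX X f z d -> continuousX f z.
Proof.
  intros H eps Heps. destruct (H 1 ltac:(lra)) as [del [Hdel G]].
  pose proof (sqrt_pos (ip_sqnorm hs_inner d)) as Hd0. fold (xnorm d) in Hd0.
  set (r := Rmin del (eps / (xnorm d + 1))).
  assert (Hr : 0 < r) by (apply Rmin_glb_lt; auto; apply Rdiv_lt_0_compat; lra).
  exists r. split; auto. intros h Hh. rewrite hnorm_ip_norm.
  destruct (Ceq_dec h (RtoC 0)) as [->|E].
  - rewrite Cplus_0_r. unfold vsub. rewrite hs_addN, (norm_zero XA). lra.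
  - specialize (G h E (Rlt_le_trans _ _ _ Hh (Rmin_l _ _))). rewrite hnorm_ip_norm in G.
    set (q := hs_scal (Cinv h) (hs_add (f (Cplus z h)) (hs_opp (f z)))) in *.
    (* f (z + h) - f z = h q, and q stays within 1 of d *)
    assert (Eq : xsub (f (Cplus z h)) (f z) = hs_scal h q).
    { unfold q. rewrite hs_scalA, Cinv_r, hs_scal1 by auto. reflexivity. }
    rewrite Eq, (norm_scal XA) by auto.
    assert (Hq : xnorm q <= xnorm d + 1).
    { pose proof (norm_sub_triangle XA q d hs_zero I I I) as Htri.
      rewrite !(norm_sub_zero XA) in Htri. unfold vsub in Htri. lra. }
    assert (Hh2 : Cmod h * (xnorm d + 1) < eps).
    { apply Rlt_le_trans with (r * (xnorm d + 1)); [apply Rmult_lt_compat_r; lra|].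
      unfold r. apply Rle_trans with (eps / (xnorm d + 1) * (xnorm d + 1)).
      - apply Rmult_le_compat_r; [lra|apply Rmin_r].
      - right. field. lra. }
    pose proof (Cmod_ge_0 h). pose proof (sqrt_pos (ip_sqnorm hs_inner q)). nra.
Qed.

Lemma is_derivX_comb f g z a b d1 d2 : is_derivX X f z d1 -> is_derivX X g z d2 ->
  is_derivX X (fadd X (fscal X a f) (fscal X b g)) z (hs_add (hs_scal a d1) (hs_scal b d2)).
Proof.
  intros H1 H2 eps Heps.
  pose proof (Cmod_ge_0 a). pose proof (Cmod_ge_0 b).
  set (e := eps / (Cmod a + Cmod b + 1)).
  assert (He : 0 < e) by (apply Rdiv_lt_0_compat; lra).
  destruct (H1 e He) as [e1 [He1 G1]]. destruct (H2 e He) as [e2 [He2 G2]].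
  exists (Rmin e1 e2). split; [apply Rmin_glb_lt; auto|].
  intros h Hh Hm. specialize (G1 h Hh (Rlt_le_trans _ _ _ Hm (Rmin_l _ _))).
  specialize (G2 h Hh (Rlt_le_trans _ _ _ Hm (Rmin_r _ _))).
  rewrite hnorm_ip_norm in *. unfold fadd, fscal.
  set (q1 := hs_add (hs_scal (/ h) (hs_add (f (z + h)%C) (hs_opp (f z)))) (hs_opp d1)) in *.
  set (q2 := hs_add (hs_scal (/ h) (hs_add (g (z + h)%C) (hs_opp (g z)))) (hs_opp d2)) in *.
  match goal with |- xnorm ?E < _ => replace E with (hs_add (hs_scal a q1) (hs_scal b q2)) end.
  2: { unfold q1, q2. vring XA. }
  eapply Rle_lt_trans; [apply (norm_triangle XA); auto|].
  rewrite !(norm_scal XA) by auto.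
  assert (Cmod a * e + Cmod b * e < eps).
  { unfold e. apply Rmult_lt_reg_r with (Cmod a + Cmod b + 1); [lra|].
    field_simplify; lra. }
  pose proof (sqrt_pos (ip_sqnorm hs_inner q1)). pose proof (sqrt_pos (ip_sqnorm hs_inner q2)).
  fold (xnorm q1) (xnorm q2) in *. nra.
Qed.

Lemma is_derivX_Tshift (g : C -> X) beta :
  continuousX g beta -> is_derivX X (Tshift X beta g) beta (g beta).
Proof.
  intros Hc eps Heps. destruct (Hc eps Heps) as [d [Hd G]]. exists d. split; auto.
  intros h Hh Hm. specialize (G h Hm). unfold Tshift, fadd, fopp, fscal, Tmul.
  match goal with |- hnorm ?E < _ => replace E with (xsub (g (Cplus beta h)) (g beta)); auto end.
  vring XA. field. auto.
Qed.

Lemma continuousX_vanish (f : C -> X) beta : continuousX f beta ->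
  (forall z, z <> beta -> f z = hs_zero) -> f beta = hs_zero.
Proof.
  intros Hc H0. apply xnorm_small_eq0. intros eps Heps.
  destruct (Hc eps Heps) as [d [Hd G]].
  specialize (G (RtoC (d / 2))). rewrite Cmod_R, Rabs_pos_eq in G by lra.
  rewrite H0 in G by (intro E; apply (f_equal fst) in E; simpl in E; lra).
  rewrite <- (norm_opp XA), <- hnorm_ip_norm by auto.
  replace (hs_opp (f beta)) with (xsub hs_zero (f beta)) by vring XA. apply G. lra.
Qed.

Lemma Rshift_at f beta : Rshift X beta f beta = derivX X f beta.
Proof. unfold Rshift. destruct (excluded_middle_informative (beta = beta)); tauto. Qed.

Lemma Rshift_neq f beta z : z <> beta -> Rshift X beta f z = hs_scal (Cinv (Cminus z beta)) (f z).
Proof. intros. unfold Rshift. destruct (excluded_middle_informative (z = beta)); tauto. Qed.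

Lemma Tshift_at g beta : Tshift X beta g beta = hs_zero.
Proof. apply hs_addN. Qed.

Lemma Tshift_Rshift f beta : f beta = hs_zero -> Tshift X beta (Rshift X beta f) = f.
Proof.
  intros Hf. apply functional_extensionality. intro z.
  unfold Tshift, fadd, fopp, fscal, Tmul. destruct (Ceq_dec z beta) as [->|E].
  - rewrite Hf. apply hs_addN.
  - rewrite Rshift_neq by auto. vring XA. field. apply Cminus_neq0; auto.
Qed.

Lemma Rshift_Tshift (g : C -> X) beta : continuousX g beta -> Rshift X beta (Tshift X beta g) = g.
Proof.
  intros Hg. apply functional_extensionality. intro z. destruct (Ceq_dec z beta) as [->|E].
  - rewrite Rshift_at. apply derivX_eq, is_derivX_Tshift, Hg.
  - rewrite Rshift_neq by auto. unfold Tshift, fadd, fopp, fscal, Tmul.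
    vring XA. field. apply Cminus_neq0; auto.
Qed.

Lemma Tmul_decomp r beta : Tmul X r = fadd X (Tshift X beta r) (fscal X beta r).
Proof.
  apply functional_extensionality. intro z. unfold Tshift, fadd, fopp, fscal, Tmul. vring XA.
Qed.

Lemma Rshift_comb f g a b beta df dg : is_derivX X f beta df -> is_derivX X g beta dg ->
  Rshift X beta (fadd X (fscal X a f) (fscal X b g))
  = fadd X (fscal X a (Rshift X beta f)) (fscal X b (Rshift X beta g)).
Proof.
  intros Hf Hg. apply functional_extensionality. intro z. unfold fadd at 2, fscal at 3 4.
  destruct (Ceq_dec z beta) as [->|E].
  - rewrite !Rshift_at, (derivX_eq f beta df), (derivX_eq g beta dg) by auto.
    apply derivX_eq, is_derivX_comb; auto.
  - rewrite !Rshift_neq by auto. unfold fadd, fscal. vring XA.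
Qed.

End VectorFunctions.

Section RKHS.
Context {X : CHilbert} {mem : (C -> X) -> Prop} {ip : (C -> X) -> (C -> X) -> C}
  {K : C -> C -> X -> X}.
Hypothesis HR : is_RKHS X mem ip K.
Local Notation norm := (ip_norm ip).
Local Notation hsub := (vsub (fadd X) (fopp X)).
Let XA := CHilbert_pre_hilbert X.

Lemma RKHS_pre_hilbert : is_pre_hilbert (fzero X) (fadd X) (fopp X) (fscal X) ip mem.
Proof.
  destruct HR. constructor; intros; auto;
    unfold fadd, fopp, fscal, fzero; apply functional_extensionality; intros;
    auto using hs_addA, hs_addC, hs_add0, hs_addN, hs_scalA, hs_scal1, hs_scalDr, hs_scalDl.
Qed.

Lemma RKHS_complete : is_complete (fadd X) (fopp X) ip mem.
Proof. exact (rk_complete _ _ _ _ HR). Qed.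

Let FA := RKHS_pre_hilbert.

Lemma RKHS_derivX f z : mem f -> is_derivX X f z (derivX X f z).
Proof.
  intros Hf. destruct (rk_entire _ _ _ _ HR f Hf z) as [d Hd]. now rewrite (derivX_eq f z d).
Qed.

Lemma RKHS_continuous f z : mem f -> continuousX f z.
Proof. intros Hf. eapply is_derivX_continuous, RKHS_derivX, Hf. Qed.

(* |f(gam)|^2 = <f, K_gam f(gam)> <= |f| |K_gam f(gam)|
   and |K_gam u|^2 = <K_gam(gam) u, u> <= M |u|^2. *)
Lemma RKHS_eval_bounded gam : exists c, 0 <= c /\ forall f, mem f -> hnorm (f gam) <= c * norm f.
Proof.
  destruct (rk_K_bounded _ _ _ _ HR gam gam) as [M [HM HK]].
  exists (sqrt M). split; [apply sqrt_pos|]. intros f Hf.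
  set (u := f gam). set (k := fun z => K gam z u).
  assert (Hk : mem k) by apply (rk_K_mem _ _ _ _ HR).
  assert (E1 : hs_inner u u = ip f k) by (symmetry; apply (rk_reproducing _ _ _ _ HR); auto).
  assert (E2 : ip k k = hs_inner (K gam gam u) u) by (apply (rk_reproducing _ _ _ _ HR); auto).
  rewrite hnorm_ip_norm.
  assert (B1 : ip_norm hs_inner u * ip_norm hs_inner u <= norm f * norm k).
  { rewrite (norm_sqr XA u I). unfold ip_sqnorm. rewrite E1.
    eapply Rle_trans; [apply Re_le_Cmod|]. apply (Cauchy_Schwarz FA); auto. }
  assert (B2 : norm k <= sqrt M * ip_norm hs_inner u).
  { unfold ip_norm at 1, ip_sqnorm. rewrite E2. unfold ip_norm.
    rewrite <- sqrt_mult by (auto; apply (sqnorm_ge0 XA); auto). apply sqrt_le_1_alt.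
    eapply Rle_trans; [apply Re_le_Cmod|]. eapply Rle_trans; [apply (Cauchy_Schwarz XA); auto|].
    eapply Rle_trans; [apply Rmult_le_compat_r; [apply sqrt_pos|apply HK]|].
    rewrite Rmult_assoc, hnorm_ip_norm, (norm_sqr XA u I). lra. }
  pose proof (sqrt_pos (ip_sqnorm hs_inner u)). pose proof (sqrt_pos (ip_sqnorm ip f)).
  pose proof (sqrt_pos (ip_sqnorm ip k)). pose proof (sqrt_pos M).
  fold (ip_norm (@hs_inner X) u) (norm f) (norm k) in *.
  destruct (Req_dec (ip_norm hs_inner u) 0) as [Z|Z]; [rewrite Z; nra|].
  apply Rmult_le_reg_r with (ip_norm hs_inner u); nra.
Qed.

Lemma Hsub_closed_subspace beta :
  is_closed_subspace (fzero X) (fadd X) (fopp X) (fscal X) ip mem (Hsub X mem beta).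
Proof.
  constructor.
  - intros f [Hf _]. exact Hf.
  - split; [apply (rk_zero _ _ _ _ HR)|reflexivity].
  - intros a b f g [Hf Hf0] [Hg Hg0]. split; [apply (mem_comb FA); auto|].
    unfold fadd, fscal. rewrite Hf0, Hg0, !(scal0r XA). apply hs_add0.
  - intros u l Hu Hl Hc. split; auto.
    destruct (RKHS_eval_bounded beta) as [c [Hc0 Hb]].
    apply (norm_eq0 XA); auto. rewrite <- hnorm_ip_norm.
    apply Rle_antisym; [|apply sqrt_pos].
    apply (le_of_converges u l _ 0 c Hc Hc0). intro n. destruct (Hu n) as [Hun Hun0].
    replace (l beta) with (hs_opp (hsub (u n) l beta))
      by (unfold vsub, fadd, fopp; rewrite Hun0; vring XA).
    rewrite Rplus_0_l, hnorm_ip_norm, (norm_opp XA) by auto. apply Hb, (mem_sub FA); auto.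
Qed.

Lemma RKHS_Rshift_comb beta a b f g : mem f -> mem g ->
  Rshift X beta (fadd X (fscal X a f) (fscal X b g))
  = fadd X (fscal X a (Rshift X beta f)) (fscal X b (Rshift X beta g)).
Proof.
  intros Hf Hg. apply Rshift_comb with (derivX X f beta) (derivX X g beta); apply RKHS_derivX; auto.
Qed.

Lemma Hsub_Tshift g beta : Dom X mem g -> Hsub X mem beta (Tshift X beta g).
Proof.
  intros [Hg HTg]. split; [|apply Tshift_at].
  apply (mem_sub FA); [exact HTg|apply (ph_mem_scal FA); auto].
Qed.

Lemma Dom_Rshift f beta : Hsub X mem beta f -> mem (Rshift X beta f) -> Dom X mem (Rshift X beta f).
Proof.
  intros [Hf Hf0] HRf. split; auto. change (mem (Tmul X (Rshift X beta f))).
  rewrite (Tmul_decomp _ beta), Tshift_Rshift by auto.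
  apply (ph_mem_add FA); [auto|apply (ph_mem_scal FA); auto].
Qed.

Lemma Rshift_range beta g :
  (forall f, Hsub X mem beta f -> mem (Rshift X beta f)) ->
  (exists f, Hsub X mem beta f /\ Rshift X beta f = g) <-> Dom X mem g.
Proof.
  intros HRc. split.
  - intros [f [Hf <-]]. apply Dom_Rshift; auto.
  - intros Hg. exists (Tshift X beta g). split; [apply Hsub_Tshift; auto|].
    apply Rshift_Tshift, RKHS_continuous, Hg.
Qed.

Lemma Tshift_range beta g :
  (forall f, Hsub X mem beta f -> mem (Rshift X beta f)) ->
  (exists f, Dom X mem f /\ Tshift X beta f = g) <-> Hsub X mem beta g.
Proof.
  intros HRc. split.
  - intros [f [Hf <-]]. apply Hsub_Tshift; auto.
  - intros Hg. exists (Rshift X beta g). split; [apply Dom_Rshift; auto|].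
    apply Tshift_Rshift, Hg.
Qed.

End RKHS.

Section RshiftBounded.
Context {X : CHilbert} {mem : (C -> X) -> Prop} {ip : (C -> X) -> (C -> X) -> C}
  {K : C -> C -> X -> X}.
Hypothesis HR : is_RKHS X mem ip K.
Variable beta : C.
Hypothesis HRc : forall f, Hsub X mem beta f -> mem (Rshift X beta f).
Local Notation norm := (ip_norm ip).
Local Notation hsub := (vsub (fadd X) (fopp X)).
Local Notation W := (Hsub X mem beta).
Local Notation Rb := (Rshift X beta).
Let FA := RKHS_pre_hilbert HR.
Let W_mem f : W f -> mem f := fun Hf => proj1 Hf.

Definition Rshift_adjoint_dom (h : C -> X) : Prop :=
  mem h /\ exists c, forall f, W f -> Cmod (ip (Rb f) h) <= c * norm f.

Lemma adjoint_dom_comb a b h1 h2 : Rshift_adjoint_dom h1 -> Rshift_adjoint_dom h2 ->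
  Rshift_adjoint_dom (fadd X (fscal X a h1) (fscal X b h2)).
Proof.
  intros [H1 [c1 Hc1]] [H2 [c2 Hc2]]. split; [apply (mem_comb FA); auto|].
  exists (Cmod a * c1 + Cmod b * c2). intros f Hf.
  assert (HRf : mem (Rb f)) by auto.
  rewrite (innerDr FA), !(innerZr FA) by (auto; apply (ph_mem_scal FA); auto).
  eapply Rle_trans; [apply Cmod_triangle|]. rewrite !Cmod_mult, !Cmod_conj.
  pose proof (Hc1 f Hf). pose proof (Hc2 f Hf). pose proof (Cmod_ge_0 a). pose proof (Cmod_ge_0 b).
  pose proof (Cmod_ge_0 (ip (Rb f) h1)). pose proof (Cmod_ge_0 (ip (Rb f) h2)). nra.
Qed.

(* <R f, K_gam u> = <f(gam), u> / (gam - beta) = <f, K_gam u> / (gam - beta) *)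
Lemma adjoint_dom_kernel gam u : gam <> beta -> Rshift_adjoint_dom (fun z => K gam z u).
Proof.
  intros Hgam. assert (Hk : mem (fun z => K gam z u)) by apply (rk_K_mem _ _ _ _ HR).
  split; auto. exists (Cmod (Cinv (Cminus gam beta)) * norm (fun z => K gam z u)). intros f Hf.
  rewrite (rk_reproducing _ _ _ _ HR), Rshift_neq, hs_innerZl by auto.
  rewrite <- (rk_reproducing _ _ _ _ HR) by (apply W_mem; auto).
  rewrite Cmod_mult. pose proof (Cauchy_Schwarz FA f _ (W_mem f Hf) Hk).
  pose proof (Cmod_ge_0 (Cinv (Cminus gam beta))). nra.
Qed.

Lemma adjoint_dom_uniform_unit : exists M, 0 <= M /\
  forall h, Rshift_adjoint_dom h -> norm h <= 1 ->
  forall f, W f -> Cmod (ip (Rb f) h) <= M * norm f.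
Proof.
  set (I := {h | Rshift_adjoint_dom h /\ norm h <= 1}).
  destruct (uniform_boundedness FA (RKHS_complete HR) (Hsub_closed_subspace HR beta)
    (fun (i : I) f => ip (Rb f) (proj1_sig i))) as [M [HM0 HM]].
  - intros [h Hh] a b f g Hf Hg. simpl. destruct Hh as [[Hh _] _].
    rewrite (RKHS_Rshift_comb HR), (ph_innerDl FA), !(ph_innerZl FA)
      by (auto; apply (ph_mem_scal FA); auto).
    reflexivity.
  - intros [h [[Hh Hc] Hh1]]. exact Hc.
  - intros f Hf. exists (norm (Rb f)). intros [h [[Hh Hc] Hh1]]. simpl.
    eapply Rle_trans; [apply (Cauchy_Schwarz FA); auto|].
    pose proof (sqrt_pos (ip_sqnorm ip (Rb f))). fold (norm (Rb f)) in *. nra.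
  - exists M. split; auto. intros h Hh Hh1 f Hf. exact (HM (exist _ h (conj Hh Hh1)) f Hf).
Qed.

Lemma adjoint_dom_uniform : exists M, 0 <= M /\
  forall h, Rshift_adjoint_dom h -> forall f, W f -> Cmod (ip (Rb f) h) <= M * norm f * norm h.
Proof.
  destruct adjoint_dom_uniform_unit as [M [HM0 HM]].
  exists M. split; auto. intros h Hh f Hf.
  pose proof (sqrt_pos (ip_sqnorm ip h)) as Hh0. fold (norm h) in Hh0.
  pose proof (sqrt_pos (ip_sqnorm ip f)) as Hf0. fold (norm f) in Hf0.
  destruct (Req_dec (norm h) 0) as [Z|Z].
  - apply (norm_eq0 FA) in Z; [|apply Hh]. subst h.
    rewrite (inner0r FA), Cmod_0 by auto. repeat apply Rmult_le_pos; auto.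
  - assert (Hinv : 0 < / norm h) by (apply Rinv_0_lt_compat; lra).
    set (h' := fscal X (RtoC (/ norm h)) h).
    assert (Hh' : Rshift_adjoint_dom h').
    { replace h' with (fadd X (fscal X (RtoC (/ norm h)) h) (fscal X (RtoC 0) h))
        by (unfold h'; vring FA).
      apply adjoint_dom_comb; auto. }
    assert (Hn' : norm h' <= 1).
    { unfold h'. rewrite (norm_scal FA), Cmod_R, Rabs_pos_eq by (apply Hh || lra).
      right. field. lra. }
    specialize (HM h' Hh' Hn' f Hf). unfold h' in HM.
    rewrite (innerZr FA), Cmod_mult, Cmod_conj, Cmod_R, Rabs_pos_eq in HM
      by (auto; apply Hh || lra).
    apply Rmult_le_compat_r with (r := norm h) in HM; [|lra].
    replace (/ norm h * Cmod (ip (Rb f) h) * norm h) with (Cmod (ip (Rb f) h)) in HM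
      by (field; lra).
    exact HM.
Qed.

Lemma adjoint_dom_closed_subspace :
  is_closed_subspace (fzero X) (fadd X) (fopp X) (fscal X) ip mem Rshift_adjoint_dom.
Proof.
  destruct adjoint_dom_uniform as [M [HM0 HM]].
  constructor.
  - intros h [Hh _]. exact Hh.
  - split; [apply (ph_mem0 FA)|]. exists 0. intros f Hf.
    rewrite (inner0r FA), Cmod_0 by auto. lra.
  - intros a b h1 h2. apply adjoint_dom_comb.
  - intros u l Hu Hl Hc. split; auto. exists (M * norm l). intros f Hf.
    assert (HRf : mem (Rb f)) by auto.
    pose proof (sqrt_pos (ip_sqnorm ip f)). pose proof (sqrt_pos (ip_sqnorm ip (Rb f))).
    fold (norm f) (norm (Rb f)) in *.
    apply (le_of_converges u l _ _ (M * norm f + norm (Rb f)) Hc); [nra|]. intro n.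
    assert (HuN : mem (u n)) by apply (Hu n).
    pose proof (Cmod_inner_sub_le FA _ _ _ HRf Hl HuN). pose proof (HM _ (Hu n) f Hf).
    pose proof (norm_sub_triangle FA (u n) l (fzero X) HuN Hl (ph_mem0 FA)) as Hun.
    rewrite !(norm_sub_zero FA) in Hun.
    assert (M * norm f * norm (u n) <= M * norm f * (norm (hsub (u n) l) + norm l))
      by (apply Rmult_le_compat_l; nra).
    nra.
Qed.

Lemma adjoint_dom_full g : mem g -> Rshift_adjoint_dom g.
Proof.
  intros Hg.
  destruct (orthogonal_projection FA (RKHS_complete HR) adjoint_dom_closed_subspace g Hg)
    as [s [Hs Horth]].
  assert (Hw : mem (hsub g s)) by (apply (mem_sub FA); auto; apply Hs).
  (* g - s is orthogonal to every kernel function K_gam u with gam <> beta *)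
  assert (Hw0 : forall gam, gam <> beta -> hsub g s gam = hs_zero).
  { intros gam Hgam. apply hs_inner_eq0. rewrite <- (rk_reproducing _ _ _ _ HR) by auto.
    apply Horth, adjoint_dom_kernel; auto. }
  assert (Hwz : hsub g s = fzero X).
  { apply functional_extensionality. intro z. destruct (Ceq_dec z beta) as [->|E]; [|auto].
    apply continuousX_vanish; auto. apply (RKHS_continuous HR); auto. }
  apply (vsub_eq FA) in Hwz. subst. exact Hs.
Qed.

Lemma Rshift_norm_bounded : exists M, 0 <= M /\ forall f, W f -> norm (Rb f) <= M * norm f.
Proof.
  destruct adjoint_dom_uniform as [M [HM0 HM]]. exists M. split; auto. intros f Hf.
  assert (HRf : mem (Rb f)) by auto.
  (* |R f|^2 = <R f, R f> <= M |f| |R f| *)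
  pose proof (HM (Rb f) (adjoint_dom_full _ HRf) f Hf) as B.
  pose proof (Re_le_Cmod (ip (Rb f) (Rb f))) as Hre.
  change (Re (ip (Rb f) (Rb f))) with (ip_sqnorm ip (Rb f)) in Hre.
  rewrite <- (norm_sqr FA) in Hre by auto.
  pose proof (sqrt_pos (ip_sqnorm ip (Rb f))). pose proof (sqrt_pos (ip_sqnorm ip f)).
  fold (norm f) (norm (Rb f)) in *.
  destruct (Req_dec (norm (Rb f)) 0) as [Z|Z]; [rewrite Z; nra|].
  apply Rmult_le_reg_r with (norm (Rb f)); nra.
Qed.

Lemma Rshift_regular_type : regular_type X mem ip beta.
Proof.
  destruct Rshift_norm_bounded as [M [HM0 HM]].
  exists (/ (M + 1)). split; [apply Rinv_0_lt_compat; lra|]. intros f Hf.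
  pose proof (HM _ (Hsub_Tshift HR f beta Hf)) as B.
  rewrite Rshift_Tshift in B by (apply (RKHS_continuous HR), Hf).
  change (norm (Tshift X beta f) >= / (M + 1) * norm f).
  pose proof (sqrt_pos (ip_sqnorm ip (Tshift X beta f))). fold (norm (Tshift X beta f)) in *.
  apply Rle_ge, Rmult_le_reg_l with (M + 1); [lra|].
  rewrite <- Rmult_assoc, Rinv_r, Rmult_1_l by lra. nra.
Qed.

End RshiftBounded.

Theorem lemma2 (X : CHilbert) (mem : (C -> X) -> Prop)
  (ip : (C -> X) -> (C -> X) -> C) (K : C -> C -> X -> X) :
  is_RKHS X mem ip K ->
  (exists f, mem f /\ f <> fzero X) ->
  forall beta : C,
    ((forall f, Hsub X mem beta f -> mem (Rshift X beta f)) <->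
     (forall g, (exists f, Hsub X mem beta f /\ Rshift X beta f = g) <-> Dom X mem g))
    /\
    ((forall f, Hsub X mem beta f -> mem (Rshift X beta f)) ->
       Rshift_bounded_linear X mem ip beta
       /\ (forall g, (exists f, Dom X mem f /\ Tshift X beta f = g) <-> Hsub X mem beta g)
       /\ regular_type X mem ip beta).
Proof.
  intros HR _ beta. split; [split|].
  - intros HRc g. apply (Rshift_range HR beta g HRc).
  - intros Hrange f Hf. apply (Hrange (Rshift X beta f)). eauto.
  - intros HRc. split; [|split].
    + split; [exact HRc|split].
      * intros a b f g Hf Hg. apply (RKHS_Rshift_comb HR); [apply Hf|apply Hg].
      * apply (Rshift_norm_bounded HR beta HRc).
    + intro g. apply (Tshift_range HR beta g HRc).
    + apply (Rshift_regular_type HR beta HRc).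
Qed.
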